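(* Let $H$ be a simple $3$-connected graph and $\mathcal{F}$ an arbitrary family of injective maps from $X=\{a,b,c,d\}$ to $V(H)$. Let $G$ be a $2$-connected graph with $X\subseteq V(G)$ and a $2$-separation $(A,B)$ with $A\cap B=\{u,v\}$. Suppose $u,v\in X$, and that some vertex of $X\setminus\{u,v\}$ lies in $A\setminus\{u,v\}$ and some vertex of $X\setminus\{u,v\}$ lies in $B\setminus\{u,v\}$. Then $G$ does not have an $H(X)$-minor.
   Context: A $2$-separation is a pair $(A,B)$ with $A\cup B=V(G)$, $|A\cap B|\le2$ and no edge between $A\setminus B$ and $B\setminus A$. An $H$-model in $G$ is a family $\{G_x:x\in V(H)\}$ of pairwise vertex-disjoint connected subgraphs of $G$ such that for every edge $xy\in E(H)$ some vertex of $G_x$ is adjacent in $G$ to some vertex of $G_y$. For injective $\pi:X\to V(H)$, $G$ has an $H(X)$-minor with respect to $\pi$ if there is an $H$-model with $w\in V(G_{\pi(w)})$ for all $w\in X$; $G$ has an $H(X)$-minor (with respect to $\mathcal{F}$) if this holds for some $\pi\in\mathcal{F}$. *)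

From mathcomp Require Import all_boot.
Set Implicit Arguments. Unset Strict Implicit. Unset Printing Implicit Defensive.

Definition simple_graph (T : finType) (e : rel T) : Prop :=
  symmetric e /\ irreflexive e.

Definition restr (T : finType) (e : rel T) (S : {set T}) : rel T :=
  [rel x y | [&& e x y, x \in S & y \in S]].

Definition connected_in (T : finType) (e : rel T) (S : {set T}) : Prop :=
  forall x y, x \in S -> y \in S -> connect (restr e S) x y.

Definition k_connected (T : finType) (e : rel T) (k : nat) : Prop :=
  k < #|T| /\ forall S : {set T}, #|S| < k -> connected_in e (~: S).

Definition two_separation (T : finType) (e : rel T) (A B : {set T}) : Prop :=
  [/\ A :|: B = setT, #|A :&: B| <= 2 &
      forall x y, x \in A :\: B -> y \in B :\: A -> ~~ e x y].

Definition is_model (V T : finType) (eH : rel V) (eG : rel T)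
    (M : V -> {set T}) : Prop :=
  [/\ forall x, M x != set0,
      forall x, connected_in eG (M x),
      forall x y, x != y -> [disjoint M x & M y] &
      forall x y, eH x y -> exists p q, [/\ p \in M x, q \in M y & eG p q]].

(* X = {a,b,c,d} is labelled by 'I_4 and embedded in V(G) by xG.
   G has an H(X)-minor w.r.t. pi : X -> V(H). *)
Definition has_HX_minor_wrt (V T : finType) (eH : rel V) (eG : rel T)
    (xG : 'I_4 -> T) (pi : 'I_4 -> V) : Prop :=
  exists M : V -> {set T}, is_model eH eG M /\ forall w, xG w \in M (pi w).

Definition has_HX_minor (V T : finType) (eH : rel V) (eG : rel T)
    (xG : 'I_4 -> T) (F : {set {ffun 'I_4 -> V}}) : Prop :=
  exists2 pi, pi \in F & has_HX_minor_wrt eH eG xG pi.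

From mathcomp Require Import all_boot.

Set Implicit Arguments.
Unset Strict Implicit.
Unset Printing Implicit Defensive.

(* The branch sets of the vertices of H other than pi(u) and pi(v) avoid u
   and v, and since H - {pi(u), pi(v)} is connected their union is a
   connected subgraph of G - {u, v}.  It contains the vertices of X lying
   strictly inside A and strictly inside B, which the separator {u, v} keeps
   apart. *)

Lemma connect_closed_fwd (T : finType) (e : rel T) (P : pred T) x y :
  (forall a b, P a -> e a b -> P b) -> connect e x y -> P x -> P y.
Proof.
move=> Pe /connectP[s pth ->]; elim: s x pth => [|z s IHs] x //=.
by case/andP=> exz pz Px; apply: IHs pz (Pe _ _ Px exz).
Qed.

Lemma connect_restr_sub (T : finType) (e : rel T) (S S' : {set T}) :
  S \subset S' -> subrel (connect (restr e S)) (connect (restr e S')).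
Proof.
move=> sSS'; apply: connect_sub => x y /andP[exy /andP[xS yS]].
by apply: connect1; rewrite /restr /= exy !(subsetP sSS').
Qed.

Section TwoSeparation.

Variables (T : finType) (e : rel T) (A B : {set T}).
Hypothesis sepAB : two_separation e A B.

Lemma two_sep_edge_side a b :
  a \in A :\: B -> e a b -> b \notin A :&: B -> b \in A :\: B.
Proof.
case: sepAB => ABT _ noedge aAB eab; have := noedge a b aAB.
have : b \in A :|: B by rewrite ABT inE.
by rewrite eab !inE; case: (b \in A); case: (b \in B) => // _ /(_ isT).
Qed.

Lemma connected_two_sep_side (S : {set T}) a :
  connected_in e S -> [disjoint S & A :&: B] -> a \in S -> a \in A :\: B ->
  S \subset A :\: B.
Proof.
move=> Scon SAB aS aAB; apply/subsetP => y yS.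
apply: (@connect_closed_fwd _ _ [pred t | t \in A :\: B] _ _ _ (Scon a y aS yS) aAB).
move=> c d cAB /andP[ecd /andP[_ dS]]; apply: two_sep_edge_side cAB ecd _.
by rewrite (disjointFr SAB dS).
Qed.

End TwoSeparation.

Section Models.

Variables (V T : finType) (eH : rel V) (eG : rel T) (M : V -> {set T}).
Hypothesis Mmod : is_model eH eG M.

Lemma model_mem_inj x y t : t \in M x -> t \in M y -> x = y.
Proof.
case: Mmod => _ _ Mdis _ tx ty; apply/eqP/negPn/negP.
by move=> /Mdis/disjointFr/(_ tx); rewrite ty.
Qed.

Lemma model_bigcup_connected (Z : {set V}) :
  connected_in eH Z -> connected_in eG (\bigcup_(z in Z) M z).
Proof.
case: Mmod => _ Mcon _ Medge Zcon x y /bigcupP[z1 z1Z xM] /bigcupP[z2 z2Z yM].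
set U := \bigcup_(z in Z) M z.
have MU z : z \in Z -> M z \subset U by move=> zZ; apply: bigcup_sup.
pose reached := [set t | connect (restr eG U) x t].
suff /subsetP/(_ y yM) : M z2 \subset reached by rewrite inE.
have reach_branch z t : z \in Z -> t \in M z -> t \in reached ->
    M z \subset reached.
  move=> zZ tM; rewrite inE => xt; apply/subsetP => t' t'M; rewrite inE.
  apply: connect_trans xt _.
  exact: connect_restr_sub (MU z zZ) _ _ (Mcon z t t' tM t'M).
apply: (@connect_closed_fwd _ _ [pred z | M z \subset reached] _ _ _
         (Zcon z1 z2 z1Z z2Z)); last first.
  by apply: reach_branch z1Z xM _; rewrite inE connect0.
move=> z z' /subsetP Pz /andP[ezz' /andP[zZ z'Z]].
have [p [q [pM qM epq]]] := Medge z z' ezz'.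
have pU := subsetP (MU z zZ) p pM; have qU := subsetP (MU z' z'Z) q qM.
apply: reach_branch z'Z qM _; have := Pz p pM; rewrite !inE => xp.
by apply: connect_trans xp (connect1 _); rewrite /restr /= epq pU qU.
Qed.

End Models.

Theorem mainTheorem13 (V : finType) (eH : rel V) (T : finType) (eG : rel T)
    (F : {set {ffun 'I_4 -> V}}) (xG : 'I_4 -> T)
    (A B : {set T}) (u v : T) :
  simple_graph eH -> k_connected eH 3 ->
  (forall pi, pi \in F -> injective pi) ->
  simple_graph eG -> k_connected eG 2 ->
  injective xG ->
  two_separation eG A B -> A :&: B = [set u; v] ->
  (exists i, xG i = u) -> (exists j, xG j = v) ->
  (exists w, xG w \notin [set u; v] /\ xG w \in A :\: [set u; v]) ->
  (exists w, xG w \notin [set u; v] /\ xG w \in B :\: [set u; v]) ->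
  ~ has_HX_minor eH eG xG F.
Proof.
move=> _ [_ Hcon] injF _ _ _ sepAB ABuv [i xi] [j xj] [w1 [nw1 w1A]] [w2 [nw2 w2B]].
move=> [pi piF [M [Mmod Mx]]].
set Z := ~: [set pi i; pi j]; set U := \bigcup_(z in Z) M z.
have Zcon : connected_in eH Z by apply: Hcon; rewrite cards2; case: (_ != _).
have UAB : [disjoint U & A :&: B].
  rewrite disjoint_sym ABuv; apply: bigcup_disjoint => z.
  rewrite !inE negb_or => /andP[zi zj]; rewrite disjoint_sym disjoints_subset.
  apply/subsetP => t tM; rewrite !inE negb_or; apply/andP; split.
  - by apply: contra_neq zi => tu; apply: (model_mem_inj Mmod tM); rewrite tu -xi Mx.
  - by apply: contra_neq zj => tv; apply: (model_mem_inj Mmod tM); rewrite tv -xj Mx.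
have w1AB : xG w1 \in A :\: B by move: w1A; rewrite -ABuv setDIr setDv set0U.
have w2BA : xG w2 \in B :\: A by move: w2B; rewrite -ABuv setDIr setDv setU0.
have inU w : xG w \notin [set u; v] -> xG w \in U.
  move=> nw; apply/bigcupP; exists (pi w); last exact: Mx.
  rewrite !inE negb_or; apply/andP; split; apply: contraNneq nw => /(injF _ piF) ->;
    by rewrite ?xi ?xj !inE eqxx ?orbT.
have /subsetP UsubAB := connected_two_sep_side sepAB
  (model_bigcup_connected Mmod Zcon) UAB (inU _ nw1) w1AB.
by move: (UsubAB _ (inU _ nw2)) w2BA; rewrite !inE => /andP[/negPf-> _] /andP[].
Qed.
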